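(* Let $G=(V,E)$ be a finite undirected unweighted simple graph. For $u\in V$ let $\mathcal{F}_{uu}$ be the set of spanning rooted forests of $G$ in which $u$ is a root, and let $$s(u)=\frac{1}{|\mathcal{F}_{uu}|}\sum_{F\in\mathcal{F}_{uu}}|F|_u,$$ where $|F|_u$ is the number of vertices of the tree rooted at $u$ in $F$. Define $\mathrm{ForestSim}(u,v)=\frac{\min(s(u),s(v))}{\max(s(u),s(v))}$ for $u,v\in V$. Then $\mathrm{ForestSim}$ is an admissible role similarity metric, i.e. it satisfies all of: (P1) $\mathrm{ForestSim}(u,v)\in[0,1]$ for all $u,v\in V$; (P2) $\mathrm{ForestSim}(u,v)=\mathrm{ForestSim}(v,u)$ for all $u,v$; (P3) if $u$ and $v$ are automorphically equivalent then $\mathrm{ForestSim}(u,v)=1$; (P4) if $u$ and $u'$ are automorphically equivalent then $\mathrm{ForestSim}(u,v)=\mathrm{ForestSim}(u',v)$ for every $v\in V$; (P5) writing $\mathrm{Dist}(u,v)=1-\mathrm{ForestSim}(u,v)$, one has $\mathrm{Dist}(u,v)\le\mathrm{Dist}(u,u')+\mathrm{Dist}(u',v)$ for all $u,u',v\in V$.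
   Context: A spanning forest of $G$ is an acyclic subgraph containing all vertices of $G$; a spanning rooted forest is a spanning forest with one root marked in each of its trees. An automorphism of $G$ is a bijection $f:V\to V$ such that $(f(u),f(v))\in E$ for every $(u,v)\in E$. Vertices $u,v$ are automorphically equivalent if there is an automorphism $f$ with $f(u)=v$. *)

From mathcomp Require Import all_boot all_order all_algebra.
Set Implicit Arguments. Unset Strict Implicit. Unset Printing Implicit Defensive.
Import Order.TTheory GRing.Theory Num.Theory.
Local Open Scope ring_scope.

Section Forests.
Variables (T : finType) (e : rel T).

Definition edgesG : {set {set T}} := [set [set x; y] | x in T, y in T & e x y].

Definition frel (F : {set {set T}}) : rel T := fun x y => [set x; y] \in F.

(* F contains no cycle: no duplicate-free closed walk x_0 ... x_{k-1} x_0 with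
   k >= 3 distinct vertices (such cycles have length at most #|T|). *)
Definition acyclic (F : {set {set T}}) : bool :=
  [forall n : 'I_(#|T|.+1), forall t : (nat_of_ord n).-tuple T,
     ~~ [&& (2 < n)%N, uniq t & cycle (frel F) t]].

(* Spanning forest of G (contains all vertices; given by its edge set). *)
Definition spanning_forest (F : {set {set T}}) : bool :=
  (F \subset edgesG) && acyclic F.

Definition rooted_by (F : {set {set T}}) (R : {set T}) : bool :=
  [forall x, #|[set r in R | connect (frel F) x r]| == 1%N].

Definition Fuu (u : T) : {set ({set {set T}} * {set T})} :=
  [set p | [&& spanning_forest p.1, rooted_by p.1 p.2 & u \in p.2]].

Definition tree_size (F : {set {set T}}) (u : T) : nat :=
  #|[set x | connect (frel F) u x]|.

Definition s_forest (R : realFieldType) (u : T) : R :=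
  (\sum_(p in Fuu u) (tree_size p.1 u)%:R) / (#|Fuu u|)%:R.

Definition ForestSim (R : realFieldType) (u v : T) : R :=
  Num.min (s_forest R u) (s_forest R v) / Num.max (s_forest R u) (s_forest R v).

Definition automorphism (f : T -> T) : Prop :=
  bijective f /\ forall u v, e u v -> e (f u) (f v).

Definition aut_equiv (u v : T) : Prop :=
  exists f, automorphism f /\ f u = v.

End Forests.

(* ForestSim(u, v) is the min/max ratio of the positive numbers s(u) and s(v),
   and 1 - min/max is a pseudometric on positive reals: for a <= b <= c the
   triangle inequality reads (1 - a/b)(1 - b/c) >= 0, and the other orderings
   of the middle point are monotonicity. An automorphism f maps rooted forests
   of G (edges and roots pointwise) bijectively from F_uu onto F_{f u, f u},
   sending the tree of u onto the tree of f u, so s is constant on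
   automorphism classes. Finally s(u) > 0 because the edgeless forest in which
   every vertex is a root belongs to F_uu. *)

From Pilot Require Import Defs.
From mathcomp Require Import all_boot all_order all_algebra.
From mathcomp Require Import ring lra.
Set Implicit Arguments. Unset Strict Implicit. Unset Printing Implicit Defensive.
Import Order.TTheory GRing.Theory Num.Theory.
Local Open Scope ring_scope.

Section RatioSimilarity.
Variable R : realFieldType.
Implicit Types a b c : R.

Definition ratio_sim a b := Num.min a b / Num.max a b.

Lemma ratio_simC a b : ratio_sim a b = ratio_sim b a.
Proof. by rewrite /ratio_sim minC maxC. Qed.

Lemma ratio_sim_le a b : a <= b -> ratio_sim a b = a / b.
Proof. by move=> le_ab; rewrite /ratio_sim min_l // max_r. Qed.

Lemma ratio_simxx a : a != 0 -> ratio_sim a a = 1.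
Proof. by move=> a_neq0; rewrite /ratio_sim minxx maxxx divff. Qed.

Lemma ratio_sim_ge0_le1 a b : 0 < a -> 0 < b -> 0 <= ratio_sim a b <= 1.
Proof.
wlog le_ab : a b / a <= b.
  move=> wlog_ab a_gt0 b_gt0.
  have [ab|/ltW ba] := leP a b; first exact: wlog_ab.
  by rewrite ratio_simC wlog_ab.
move=> a_gt0 b_gt0.
by rewrite ratio_sim_le // ler_pdivrMr // mul1r le_ab andbT divr_ge0 // ltW.
Qed.

Lemma ratio_dist_triangle a b c : 0 < a -> 0 < b -> 0 < c ->
  1 - ratio_sim a c <= (1 - ratio_sim a b) + (1 - ratio_sim b c).
Proof.
wlog le_ac : a c / a <= c.
  move=> wlog_ac a_gt0 b_gt0 c_gt0; have [ac|/ltW ca] := leP a c.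
    exact: wlog_ac.
  rewrite [X in _ <= X]addrC (ratio_simC a) (ratio_simC a) (ratio_simC b).
  exact: wlog_ac.
move=> a_gt0 b_gt0 c_gt0; rewrite (ratio_sim_le le_ac).
have /andP[_ sim_ab_le1] := ratio_sim_ge0_le1 a_gt0 b_gt0.
have /andP[_ sim_bc_le1] := ratio_sim_ge0_le1 b_gt0 c_gt0.
have [le_ba|lt_ab] := leP b a.
  have : b / c <= a / c by rewrite ler_pM2r ?invr_gt0.
  rewrite (ratio_sim_le (le_trans le_ba le_ac)) in sim_bc_le1 *; lra.
have [le_bc|lt_cb] := leP b c.
  rewrite (ratio_sim_le (ltW lt_ab)) (ratio_sim_le le_bc).
  rewrite (ratio_sim_le (ltW lt_ab)) in sim_ab_le1.
  rewrite (ratio_sim_le le_bc) in sim_bc_le1.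
  have -> : a / c = a / b * (b / c) by field; rewrite !gt_eqF.
  nra.
have : a / b <= a / c by rewrite ler_pM2l // lef_pV2 ?posrE // ltW.
rewrite (ratio_sim_le (ltW lt_ab)) ratio_simC (ratio_sim_le (ltW lt_cb)).
rewrite ratio_simC (ratio_sim_le (ltW lt_cb)) in sim_bc_le1; lra.
Qed.

End RatioSimilarity.

Lemma homo_connect (T T' : finType) (f : T -> T') (r : rel T) (r' : rel T') :
  {homo f : x y / r x y >-> r' x y} ->
  {homo f : x y / connect r x y >-> connect r' x y}.
Proof.
move=> fr x _ /connectP[p r_p ->]; apply/connectP.
by exists (map f p); [exact: homo_path fr r_p | rewrite last_map].
Qed.

Lemma mono_connect (T T' : finType) (f : T -> T') (g : T' -> T)
    (r : rel T) (r' : rel T') : cancel f g -> cancel g f ->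
  {mono f : x y / r x y >-> r' x y} ->
  {mono f : x y / connect r x y >-> connect r' x y}.
Proof.
move=> fK gK fr; apply: (homo_mono fK); apply: homo_connect.
  exact: mono2W (can_mono gK fr).
exact: mono2W fr.
Qed.

Lemma subset_imset_inj (aT rT : finType) (f : aT -> rT) (A B : {set aT}) :
  injective f -> (f @: A \subset f @: B) = (A \subset B).
Proof.
move=> f_inj; apply/idP/idP => [/subsetP sAB|]; last exact: imsetS.
by apply/subsetP => x Ax; rewrite -(mem_imset _ _ f_inj) sAB ?imset_f.
Qed.

Lemma imsetK (aT rT : finType) (f : aT -> rT) (g : rT -> aT) :
  cancel f g -> cancel (fun A : {set aT} => f @: A) (fun B => g @: B).
Proof. by move=> fK A; rewrite -imset_comp (eq_imset _ fK) imset_id. Qed.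

Section RootedForests.
Variables (T : finType) (e : rel T).
Implicit Types (F : {set {set T}}) (Rt : {set T}) (u x : T).

Definition component F x : {set T} := [set y | connect (Defs.frel F) x y].

Lemma tree_sizeE F x : tree_size F x = #|component F x|.
Proof. by []. Qed.

Lemma tree_size_gt0 F x : (0 < tree_size F x)%N.
Proof. by apply/card_gt0P; exists x; rewrite inE connect0. Qed.

Lemma component0 x : component set0 x = [set x].
Proof.
apply/setP => y; rewrite !inE; apply/idP/eqP => [|<-]; last exact: connect0.
by case/connectP => [[|z p]] //= /andP[]; rewrite /Defs.frel in_set0.
Qed.

Lemma acyclic0 : acyclic (set0 : {set {set T}}).
Proof.
apply/forallP => n; apply/forallP => -[[|x s] sz_s]; apply/negP => /and3P[] /=.
  by rewrite -(eqP sz_s).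
by move=> _ _; rewrite rcons_path /Defs.frel in_set0 andbF.
Qed.

Lemma acyclic_mono (h : T -> T) F F' : injective h ->
  {mono h : x y / Defs.frel F x y >-> Defs.frel F' x y} ->
  acyclic F' -> acyclic F.
Proof.
move=> h_inj hF /forallP acyclic_F'; apply/forallP => n; apply/forallP => t.
have := forallP (acyclic_F' n) (map_tuple h t).
by rewrite /= map_inj_uniq // (mono_cycle hF).
Qed.

Lemma edgeless_in_Fuu u : (set0, setT) \in Fuu e u.
Proof.
rewrite inE /= /spanning_forest sub0set acyclic0 in_setT !andbT.
by apply/forallP => x; rewrite setIdE setTI -/(component _ _) component0 cards1.
Qed.

Lemma s_forest_gt0 (R : realFieldType) u : 0 < s_forest e R u.
Proof.
rewrite /s_forest divr_gt0 //; last first.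
  rewrite ltr0n; apply/card_gt0P.
  by exists (set0, setT); exact: edgeless_in_Fuu.
rewrite -natr_sum ltr0n (bigD1 _ (edgeless_in_Fuu u)) /=.
by rewrite addn_gt0 tree_size_gt0.
Qed.

Definition edge_map (f : T -> T) F : {set {set T}} :=
  [set f @: X | X : {set T} in F].

Definition forest_map (f : T -> T) (p : {set {set T}} * {set T}) :=
  (edge_map f p.1, f @: p.2).

Lemma forest_mapK (f g : T -> T) :
  cancel f g -> cancel (forest_map f) (forest_map g).
Proof.
move=> fK [F Rt]; rewrite /forest_map /edge_map /=.
by rewrite (imsetK fK) (imsetK (imsetK fK)).
Qed.

Section Bijection.
Variables (f g : T -> T).
Hypotheses (fK : cancel f g) (gK : cancel g f).

Let f_inj : injective f := can_inj fK.

Lemma frel_edge_map F :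
  {mono f : x y / Defs.frel F x y >-> Defs.frel (edge_map f F) x y}.
Proof.
move=> x y; rewrite /Defs.frel.
have -> : [set f x; f y] = f @: [set x; y] by rewrite imsetU1 imset_set1.
by rewrite mem_imset //; exact: imset_inj.
Qed.

Lemma component_edge_map F x :
  component (edge_map f F) (f x) = f @: component F x.
Proof.
apply/setP => y; rewrite -[y]gK mem_imset // !inE.
exact: (mono_connect fK gK (frel_edge_map F)).
Qed.

Lemma tree_size_edge_map F x : tree_size (edge_map f F) (f x) = tree_size F x.
Proof. by rewrite !tree_sizeE component_edge_map card_imset. Qed.

Lemma acyclic_edge_map F : acyclic (edge_map f F) = acyclic F.
Proof.
apply/idP/idP; first exact: acyclic_mono f_inj (frel_edge_map F).
exact: acyclic_mono (can_inj gK) (can_mono gK (frel_edge_map F)).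
Qed.

Lemma rooted_by_edge_map F Rt :
  rooted_by (edge_map f F) (f @: Rt) = rooted_by F Rt.
Proof.
have roots_image x :
    [set r in f @: Rt | connect (Defs.frel (edge_map f F)) (f x) r]
    = f @: [set r in Rt | connect (Defs.frel F) x r].
  rewrite !setIdE -[[set r | _]]/(component _ (f x)) component_edge_map.
  by rewrite imsetI //; move=> ? ? _ _; exact: f_inj.
apply/forallP/forallP => rooted x.
  by move: (rooted (f x)); rewrite roots_image card_imset.
by rewrite -[x]gK roots_image card_imset.
Qed.

Hypothesis f_edge : {homo f : x y / e x y}.

Lemma edge_map_edgesG : edge_map f (edgesG e) = edgesG e.
Proof.
apply/eqP; rewrite eqEcard card_imset ?leqnn ?andbT; last exact: imset_inj.
apply/subsetP => _ /imsetP[_ /imset2P[x y _ exy ->] ->].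
rewrite imsetU1 imset_set1; apply/imset2P; exists (f x) (f y) => //.
by rewrite !inE in exy *; exact: f_edge.
Qed.

Lemma spanning_forest_edge_map F :
  spanning_forest e (edge_map f F) = spanning_forest e F.
Proof.
rewrite /spanning_forest acyclic_edge_map -{1}edge_map_edgesG.
by rewrite subset_imset_inj //; exact: imset_inj.
Qed.

Lemma Fuu_automorphism u : Fuu e (f u) = forest_map f @: Fuu e u.
Proof.
apply/setP => p; rewrite -[p](forest_mapK gK) mem_imset; last first.
  exact: can_inj (forest_mapK fK).
case: (forest_map g p) => F Rt.
by rewrite !inE /= spanning_forest_edge_map rooted_by_edge_map mem_imset.
Qed.

End Bijection.

Lemma s_forest_automorphism (R : realFieldType) f u :
  automorphism e f -> s_forest e R (f u) = s_forest e R u.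
Proof.
case=> -[g fK gK] f_edge; have map_inj := can_inj (forest_mapK fK).
rewrite /s_forest (Fuu_automorphism fK gK f_edge) card_imset // big_imset /=.
  by congr (_ / _); apply: eq_bigr => p _; rewrite (tree_size_edge_map fK gK).
exact: in2W.
Qed.

End RootedForests.

Theorem theorem4p6 (R : realFieldType) (T : finType) (e : rel T)
    (e_sym : symmetric e) (e_irr : irreflexive e) :
  let sim := ForestSim e R in
  [/\ (forall u v, 0 <= sim u v <= 1),
      (forall u v, sim u v = sim v u),
      (forall u v, aut_equiv e u v -> sim u v = 1),
      (forall u u' v, aut_equiv e u u' -> sim u v = sim u' v)
    & (forall u u' v, 1 - sim u v <= (1 - sim u u') + (1 - sim u' v))].
Proof.
move=> sim; have s_gt0 := s_forest_gt0 e R.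
have simE u v : sim u v = ratio_sim (s_forest e R u) (s_forest e R v) by [].
split=> [u v|u v|u v [f [f_aut <-]]|u u' v [f [f_aut <-]]|u u' v];
  rewrite !simE.
- exact: ratio_sim_ge0_le1.
- exact: ratio_simC.
- by rewrite s_forest_automorphism // ratio_simxx // gt_eqF.
- by rewrite s_forest_automorphism.
- exact: ratio_dist_triangle.
Qed.
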